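(* For every $n\ge 1$ and every Boolean function $f:\{-1,1\}^n\to\{-1,1\}$, we have $s(f)\ge \sqrt{\deg(f)}$.
   Context: For $x\in\{-1,1\}^n$, the sensitivity $s(f,x)$ is the number of indices $i\in[n]$ such that $f(x)\ne f(x^{(i)})$, where $x^{(i)}$ is $x$ with its $i$-th coordinate negated; $s(f)=\max_x s(f,x)$. $\deg(f)$ is the degree of the unique multilinear real polynomial agreeing with $f$ on $\{-1,1\}^n$. *)

From HB Require Import structures.
From mathcomp Require Import all_boot all_order all_algebra.
Set Implicit Arguments. Unset Strict Implicit. Unset Printing Implicit Defensive.
Import Order.TTheory GRing.Theory Num.Theory.
Local Open Scope ring_scope.

(* Points of {-1,1}^n, encoded by booleans: coordinate b stands for pm b,
   where pm false = 1 and pm true = -1. *)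
Definition cube (n : nat) := {ffun 'I_n -> bool}.

Definition pm (R : nzRingType) (b : bool) : R := if b then -1 else 1.

Definition boolfun (n : nat) := cube n -> bool.

Definition flip (n : nat) (x : cube n) (i : 'I_n) : cube n :=
  [ffun j => if j == i then ~~ x j else x j].

Definition sens_at (n : nat) (f : boolfun n) (x : cube n) : nat :=
  #|[set i : 'I_n | f x != f (flip x i)]|.

Definition sensitivity (n : nat) (f : boolfun n) : nat :=
  (\max_(x : cube n) sens_at f x)%N.

(* A multilinear real polynomial in n variables, given by its coefficients:
   c S is the coefficient of the monomial prod_{i in S} x_i. *)
Definition mlpoly (R : nzRingType) (n : nat) := {set 'I_n} -> R.

Definition mleval (R : nzRingType) (n : nat) (c : mlpoly R n) (x : cube n) : R :=
  \sum_(S : {set 'I_n}) c S * \prod_(i in S) pm R (x i).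

Definition mldeg (R : nzRingType) (n : nat) (c : mlpoly R n) : nat :=
  (\max_(S : {set 'I_n} | c S != 0%R) #|S|)%N.

(* c agrees with f on {-1,1}^n (such c exists and is unique, so
   deg f = mldeg c for any agreeing c). *)
Definition agrees (R : nzRingType) (n : nat) (f : boolfun n) (c : mlpoly R n) : Prop :=
  forall x : cube n, mleval c x = pm R (f x).

(* Let S be a set with c S <> 0 and |S| = deg f, and twist f by the parity on S:
   g x := f x (+) parity S x. The Fourier coefficient c S is, up to the factor 2^n,
   the imbalance of g, so one level set H of g contains more than half of the cube.
   Huang's signed adjacency matrix A of the subcube directions in S satisfies
   A^2 = |S| I, so its sqrt|S|-eigenspace has dimension 2^(n-1) and meets the space of
   functions vanishing off H nontrivially. At a maximal coordinate x of such an
   eigenvector, sqrt|S| |v x| <= (number of S-neighbours of x in H) |v x|. Since g is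
   constant on H and flipping a coordinate of S changes the parity, each of these
   neighbours witnesses a sensitive coordinate of f at x. *)
From HB Require Import structures.
From mathcomp Require Import all_boot all_order all_algebra.
From mathcomp Require Import ring zify.
Import Order.TTheory GRing.Theory Num.Theory.
Local Open Scope ring_scope.
Set Implicit Arguments. Unset Strict Implicit. Unset Printing Implicit Defensive.

Lemma flipE n (x : cube n) i j : flip x i j = if j == i then ~~ x j else x j.
Proof. by rewrite ffunE. Qed.

Lemma flipK n i : involutive (fun x : cube n => flip x i).
Proof. by move=> x; apply/ffunP=> j; rewrite !flipE; case: eqP; rewrite ?negbK. Qed.

Lemma flipC n (x : cube n) i j : flip (flip x i) j = flip (flip x j) i.
Proof. by apply/ffunP=> k; rewrite !flipE; case: (k =P i); case: (k =P j) => // -> ->. Qed.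

Lemma sum_flip (R : nzRingType) n (F : cube n -> R) i :
  \sum_x F x = \sum_x F (flip x i).
Proof. exact: reindex_inj (inv_inj (@flipK n i)). Qed.

Lemma pm_addb (R : nzRingType) a b : pm R (a (+) b) = pm R a * pm R b.
Proof. by case: a; case: b; rewrite /pm /= ?mulrNN ?mulN1r ?mulr1 ?mul1r. Qed.

Lemma pmN (R : nzRingType) b : pm R (~~ b) = - pm R b.
Proof. by case: b; rewrite /pm ?opprK. Qed.

Lemma pm_mulpp (R : nzRingType) b : pm R b * pm R b = 1.
Proof. by rewrite -pm_addb addbb. Qed.

Lemma self_opp_eq0 (R : numDomainType) (x : R) : x = - x -> x = 0.
Proof. by move/eqP; rewrite -subr_eq0 opprK -mulr2n mulrn_eq0 /= => /eqP. Qed.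

Definition parity n (S : {set 'I_n}) (x : cube n) : bool :=
  \big[addb/false]_(i in S) x i.

Lemma prod_pm_parity (R : nzRingType) n (S : {set 'I_n}) (x : cube n) :
  \prod_(i in S) pm R (x i) = pm R (parity S x).
Proof. by rewrite (big_morph (pm R) (@pm_addb R) (erefl (pm R false))). Qed.

Lemma parity_flip n (S : {set 'I_n}) (x : cube n) i :
  parity S (flip x i) = (i \in S) (+) parity S x.
Proof.
rewrite /parity; have [iS|iSn] /= := boolP (i \in S).
  rewrite (bigD1 i) // [in RHS](bigD1 i) //= flipE eqxx addNb; congr (~~ (_ (+) _)).
  by apply: eq_bigr => j /andP [_ /negbTE ji]; rewrite flipE ji.
by apply: eq_bigr => j jS; rewrite flipE; case: eqP => // ji; rewrite -ji jS in iSn.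
Qed.

Lemma sum_pm_parity_addb (R : numDomainType) n (S T : {set 'I_n}) :
  \sum_(x : cube n) pm R (parity T x (+) parity S x) =
  if T == S then #|{: cube n}|%:R else 0.
Proof.
case: eqP => [->|/eqP TS].
  by under eq_bigr do rewrite addbb; rewrite sumr_const.
have [i iTS] : exists i, (i \in T) != (i \in S).
  apply/existsP; rewrite -negb_forall; apply: contra TS => /forallP TSeq.
  by apply/eqP/setP => i; apply/eqP.
apply: self_opp_eq0; rewrite {1}(sum_flip _ i) -sumrN; apply: eq_bigr => x _.
have iTS_addb : (i \in T) (+) (i \in S) by move: iTS; case: (i \in T); case: (i \in S).
by rewrite !parity_flip addbACA iTS_addb pmN.
Qed.

Lemma sum_pm_twist (R : numDomainType) n (f : boolfun n) (c : mlpoly R n) S :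
  agrees f c -> \sum_x pm R (f x (+) parity S x) = c S * #|{: cube n}|%:R.
Proof.
move=> fc.
transitivity (\sum_T c T * \sum_(x : cube n) pm R (parity T x (+) parity S x)).
  under eq_bigr => x _ do rewrite pm_addb -fc /mleval mulr_suml.
  rewrite exchange_big; apply: eq_bigr => T _; rewrite mulr_sumr.
  by apply: eq_bigr => x _; rewrite prod_pm_parity pm_addb mulrA.
rewrite (bigD1 S) //= sum_pm_parity_addb eqxx big1 ?addr0 // => T /negbTE TS.
by rewrite sum_pm_parity_addb TS mulr0.
Qed.

Lemma sum_pm_card (R : nzRingType) (T : finType) (g : T -> bool) :
  \sum_x pm R (g x) = #|[set x | ~~ g x]|%:R - #|[set x | g x]|%:R.
Proof.
rewrite (bigID g) /= addrC -!sumr_const; congr (_ + _).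
  by apply: eq_big => [x|x /negbTE ->]; rewrite ?inE.
by rewrite -sumrN; apply: eq_big => [x|x ->]; rewrite ?inE.
Qed.

Lemma exists_majority (T : finType) (g : T -> bool) :
  #|[set x | g x]| != #|[set x | ~~ g x]| ->
  exists2 H : {set T}, (#|~: H| < #|H|)%N & {in H &, forall x y, g x = g y}.
Proof.
pose H b := [set x | g x == b].
have HC b : ~: H b = H (~~ b) by apply/setP => x; rewrite !inE; case: (g x); case: b.
have Hconst b : {in H b &, forall x y, g x = g y}.
  by move=> x y; rewrite !inE => /eqP -> /eqP ->.
have [Ht Hf] : H true = [set x | g x] /\ H false = [set x | ~~ g x].
  by split; apply/setP => x; rewrite !inE; case: (g x).
rewrite -Ht -Hf; case: ltngtP => // [lt|gt] _.
  by exists (H false); rewrite ?HC.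
by exists (H true); rewrite ?HC.
Qed.

Lemma sum_skew_offdiag (R : numDomainType) (I : finType) (A : {pred I}) (G : I -> I -> R) :
  (forall i j, i \in A -> j \in A -> i != j -> G j i = - G i j) ->
  \sum_(i in A) \sum_(j in A) G i j = \sum_(i in A) G i i.
Proof.
move=> skew.
have double : (\sum_(i in A) \sum_(j in A) G i j) *+ 2 = (\sum_(i in A) G i i) *+ 2.
  rewrite mulr2n [X in _ + X]exchange_big -big_split -sumrMnl; apply: eq_bigr => i iA.
  rewrite -big_split (bigD1 i) //= big1 ?addr0 ?mulr2n // => j /andP [jA ji].
  by rewrite (skew i j) 1?eq_sym // addrN.
by apply/eqP; move/eqP: double; rewrite -subr_eq0 -mulrnBl mulrn_eq0 subr_eq0.
Qed.

(* Huang's signing of the hypercube: every 2-dimensional face gets an odd number of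
   negative edges (see [edge_sign_anticomm]), so the signed adjacency matrix squares
   to a multiple of the identity. *)
Definition edge_sign (R : nzRingType) n (S : {set 'I_n}) (x : cube n) (i : 'I_n) : R :=
  \prod_(k in S | (i < k)%N) pm R (x k).

Definition signed_adj (R : nzRingType) n (S : {set 'I_n}) (v : cube n -> R)
  (x : cube n) : R :=
  \sum_(i in S) edge_sign R S x i * v (flip x i).

Lemma edge_sign_mulpp (R : comNzRingType) n (S : {set 'I_n}) (x : cube n) (i : 'I_n) :
  edge_sign R S x i * edge_sign R S x i = 1.
Proof. by rewrite /edge_sign -big_split; apply: big1 => k _ /=; rewrite pm_mulpp. Qed.

Lemma edge_sign_flip (R : comNzRingType) n (S : {set 'I_n}) (x : cube n) (i j : 'I_n) :
  edge_sign R S (flip x j) i =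
  if (i < j)%N && (j \in S) then - edge_sign R S x i else edge_sign R S x i.
Proof.
rewrite /edge_sign; case: ifP => [/andP [ij jS]|ijS].
  rewrite (bigD1 j) ?jS ?ij //= [in RHS](bigD1 j) ?jS ?ij //= flipE eqxx pmN mulNr.
  by congr (- (_ * _)); apply: eq_bigr => k /andP [_ /negbTE kj]; rewrite flipE kj.
apply: eq_bigr => k /andP [kS ik]; rewrite flipE; case: eqP => // kj.
by rewrite -kj kS ik in ijS.
Qed.

Lemma edge_sign_anticomm (R : comNzRingType) n (S : {set 'I_n}) (x : cube n) (i j : 'I_n) :
  i \in S -> j \in S -> i != j ->
  edge_sign R S x j * edge_sign R S (flip x j) i =
  - (edge_sign R S x i * edge_sign R S (flip x i) j).
Proof.
move=> iS jS ij; rewrite !edge_sign_flip iS jS !andbT.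
by case: ltngtP => [_|_|/val_inj eij]; [ring | ring | rewrite eij eqxx in ij].
Qed.

Lemma signed_adj_sqr (R : numDomainType) n (S : {set 'I_n}) (v : cube n -> R) (x : cube n) :
  signed_adj S (signed_adj S v) x = #|S|%:R * v x.
Proof.
pose G i j := edge_sign R S x i * edge_sign R S (flip x i) j * v (flip (flip x i) j).
transitivity (\sum_(i in S) \sum_(j in S) G i j).
  by apply: eq_bigr => i _; rewrite mulr_sumr; apply: eq_bigr => j _; rewrite mulrA.
rewrite sum_skew_offdiag => [|i j iS jS ij]; last first.
  by rewrite /G flipC edge_sign_anticomm // mulNr.
rewrite -sumr_const mulr_suml; apply: eq_bigr => i _.
by rewrite /G edge_sign_flip ltnn edge_sign_mulpp flipK mul1r.
Qed.

Definition adj_shift (R : nzRingType) n (S : {set 'I_n}) (s : R) (a : cube n -> R)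
  (x : cube n) : R := signed_adj S a x + s * a x.

Lemma signed_adj_shift (R : numDomainType) n (S : {set 'I_n}) (s : R) (a : cube n -> R)
  (x : cube n) :
  s * s = #|S|%:R -> signed_adj S (adj_shift S s a) x = s * adj_shift S s a x.
Proof.
move=> ss; have -> : signed_adj S (adj_shift S s a) x =
    signed_adj S (signed_adj S a) x + s * signed_adj S a x.
  rewrite {1}/signed_adj /adj_shift mulr_sumr -big_split /=.
  by apply: eq_bigr => i _; rewrite /signed_adj; ring.
by rewrite signed_adj_sqr /adj_shift -ss; ring.
Qed.

Lemma adj_shift_flip (R : nzRingType) n (S : {set 'I_n}) (s : R) (a : cube n -> R) t
  (y : cube n) :
  t \in S -> (forall z : cube n, z t -> a z = 0) -> ~~ y t ->
  adj_shift S s a (flip y t) = edge_sign R S (flip y t) t * a y.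
Proof.
move=> tS a0 yt; have yft : flip y t t by rewrite flipE eqxx.
rewrite /adj_shift a0 // mulr0 addr0 /signed_adj (bigD1 t) //= flipK big1 ?addr0 //.
by move=> k /andP [_ kt]; rewrite a0 ?mulr0 // flipE eq_sym (negbTE kt).
Qed.

Lemma sum_indicator (R : nzRingType) (T : finType) (a : T -> R) y :
  \sum_z (y == z)%:R * a z = a y.
Proof.
rewrite (bigD1 y) //= eqxx mul1r big1 ?addr0 // => z zy.
by rewrite eq_sym (negbTE zy) mul0r.
Qed.

Lemma adj_shift_linear (R : comNzRingType) n (S : {set 'I_n}) (s : R) (a : cube n -> R)
  (x : cube n) :
  adj_shift S s a x = \sum_y adj_shift S s (fun z => (z == y)%:R) x * a y.
Proof.
rewrite /adj_shift /signed_adj; symmetry.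
under eq_bigr do rewrite mulrDl mulr_suml.
rewrite big_split /= exchange_big /=; congr (_ + _).
  apply: eq_bigr => i _; rewrite -(sum_indicator a (flip x i)) mulr_sumr.
  by apply: eq_bigr => y _; ring.
by rewrite -(sum_indicator a x) mulr_sumr; apply: eq_bigr => y _; ring.
Qed.

Lemma exists_nonzero_solution (R : fieldType) (I J : finType) (P : {set I}) (Q : {set J})
  (M : J -> I -> R) : (#|Q| < #|P|)%N ->
  exists a : I -> R, [/\ {in ~: P, forall i, a i = 0}, exists i, a i != 0
    & {in Q, forall j, \sum_i M j i * a i = 0}].
Proof.
move=> QP.
pose Mx : 'M[R]_(#|P|, #|Q|) := \matrix_(k, l) M (enum_val l) (enum_val k).
have /matrix0Pn [k [l Kkl]] : kermx Mx != 0.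
  by rewrite -mxrank_eq0 mxrank_ker -lt0n subn_gt0 (leq_ltn_trans (rank_leq_col Mx)).
pose a i := \sum_(m : 'I_#|P| | enum_val m == i) kermx Mx k m.
exists a; split.
- move=> i; rewrite inE => iP; apply: big1 => m /eqP em.
  by rewrite -em enum_valP in iP.
- exists (enum_val l); rewrite /a (big_pred1 l) // => m /=.
  by rewrite (inj_eq enum_val_inj).
move=> j jQ.
have -> : \sum_i M j i * a i = \sum_(m : 'I_#|P|) M j (enum_val m) * kermx Mx k m.
  under eq_bigr do rewrite /a mulr_sumr.
  rewrite (exchange_big_dep xpredT) //=; apply: eq_bigr => m _.
  by rewrite (big_pred1 (enum_val m)) // => i /=; rewrite eq_sym.
have rowK : row k (kermx Mx) *m Mx = 0 by rewrite -row_mul mulmx_ker row0.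
have := congr1 (fun A : 'M[R]_(1, #|Q|) => A ord0 (enum_rank_in jQ j)) rowK.
rewrite !mxE => rowK0; rewrite -[RHS]rowK0; apply: eq_bigr => m _.
by rewrite !mxE enum_rankK_in // mulrC.
Qed.

Lemma normr_edge_sign (R : numDomainType) n (S : {set 'I_n}) (x : cube n) (i : 'I_n) :
  `|edge_sign R S x i| = 1.
Proof.
rewrite normr_prod; apply: big1 => k _.
by rewrite /pm; case: (x k); rewrite ?normrN normr1.
Qed.

Lemma exists_eigvec_vanishing (R : rcfType) n (S : {set 'I_n}) t (H : {set cube n}) :
  t \in S -> (#|~: H| < #|H|)%N ->
  exists v : cube n -> R, [/\ exists y, v y != 0, {in ~: H, forall y, v y = 0}
    & forall x, signed_adj S v x = Num.sqrt #|S|%:R * v x].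
Proof.
move=> tS HC; set s : R := Num.sqrt _.
pose P := [set y : cube n | ~~ y t].
have cardP : #|~: P| = #|P|.
  have <- : (fun y => flip y t) @^-1: P = ~: P.
    by apply/setP => y; rewrite !inE flipE eqxx.
  exact/card_preimset/inv_inj/flipK.
have QP : (#|~: H| < #|P|)%N by move: (cardsC H); rewrite -(cardsC P) cardP; lia.
have [a [aP [y ay] aH]] :=
  exists_nonzero_solution (fun j i => adj_shift S s (fun z : cube n => (z == i)%:R) j) QP.
have a0 (z : cube n) : z t -> a z = 0 by move=> zt; apply: aP; rewrite !inE zt.
exists (adj_shift S s a); split.
- exists (flip y t); rewrite adj_shift_flip //; last by apply: contraNN ay => /a0 ->.
  by rewrite mulf_neq0 // -normr_eq0 normr_edge_sign oner_eq0.
- by move=> j jH; rewrite adj_shift_linear; apply: aH.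
- by move=> x; apply: signed_adj_shift; rewrite -expr2 sqr_sqrtr ?ler0n.
Qed.

(* Evaluate the eigenvalue equation at a coordinate where [|v|] is maximal. *)
Lemma eigvec_max_degree (R : realDomainType) n (S : {set 'I_n}) (H : {set cube n})
  (v : cube n -> R) (s : R) :
  0 <= s -> (exists y, v y != 0) -> {in ~: H, forall y, v y = 0} ->
  (forall x, signed_adj S v x = s * v x) ->
  exists2 x, x \in H & s <= #|[set i in S | flip x i \in H]|%:R.
Proof.
move=> s0 [y vy] vH eig.
case: (@arg_maxP _ _ _ y xpredT (fun z => `|v z|) isT) => x _ xmax.
have vx : 0 < `|v x| by apply: lt_le_trans (xmax y isT); rewrite normr_gt0.
have xH : x \in H.
  by apply: contraLR vx; rewrite -in_setC => /vH ->; rewrite normr0 ltxx.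
exists x => //; rewrite -(ler_pM2r vx) -[s]ger0_norm // -normrM -eig.
rewrite /signed_adj (bigID (fun i => flip x i \in H)) /= [X in _ + X]big1 ?addr0;
  last by move=> i /andP [_ iH]; rewrite vH ?mulr0 // inE.
rewrite mulr_natl -sumr_const
  [X in _ <= X](eq_bigl (fun i => (i \in S) && (flip x i \in H)));
  last by move=> i; rewrite inE.
apply: le_trans (ler_norm_sum _ _ _) _; apply: ler_sum => i _.
by rewrite normrM normr_edge_sign mul1r; apply: xmax.
Qed.

Lemma huang (R : rcfType) n (S : {set 'I_n}) (H : {set cube n}) :
  (#|~: H| < #|H|)%N ->
  exists2 x, x \in H & Num.sqrt (#|S|%:R : R) <= #|[set i in S | flip x i \in H]|%:R.
Proof.
move=> HC; have [->|[t tS]] := set_0Vmem S.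
  have /card_gt0P [x xH] : (0 < #|H|)%N by apply: leq_ltn_trans HC.
  by exists x; rewrite // cards0 sqrtr0 ler0n.
have [v [v_nz vH eig]] := exists_eigvec_vanishing R tS HC.
exact: eigvec_max_degree (sqrtr_ge0 _) v_nz vH eig.
Qed.

(* Flipping a coordinate of [S] changes the parity, so it must change [f]. *)
Lemma leq_sens_at_twist n (f : boolfun n) (S : {set 'I_n}) (H : {set cube n}) x :
  {in H &, forall y z, f y (+) parity S y = f z (+) parity S z} -> x \in H ->
  (#|[set i in S | flip x i \in H]| <= sens_at f x)%N.
Proof.
move=> Hconst xH; apply: subset_leq_card; apply/subsetP => i.
rewrite !inE => /andP [iS xiH]; have := Hconst _ _ xH xiH.
by rewrite parity_flip iS; case: (f x); case: (f (flip x i)); case: (parity S x).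
Qed.

Lemma mldeg_witness (R : nzRingType) n (c : mlpoly R n) :
  mldeg c = 0%N \/ exists2 S, c S != 0 & mldeg c = #|S|.
Proof.
case: (pickP (fun S => c S != 0)) => [S0 cS0|c0]; last by left; rewrite /mldeg big_pred0.
right; have /card_gt0P nz : exists S, S \in (fun S => c S != 0) by exists S0.
by have [S cS eqS] := eq_bigmax_cond (fun S : {set 'I_n} => #|S|) nz; exists S.
Qed.

Theorem corollary1p3 (R : rcfType) (n : nat) (hn : (0 < n)%N)
  (f : boolfun n) (c : mlpoly R n) (hc : agrees f c) :
  Num.sqrt ((mldeg c)%:R : R) <= (sensitivity f)%:R.
Proof.
have [->|[S cS ->]] := mldeg_witness c; first by rewrite sqrtr0 ler0n.
pose g x := f x (+) parity S x.
have g_unbalanced : #|[set x | g x]| != #|[set x | ~~ g x]|.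
  apply/eqP => g_balanced; move/eqP: cS; apply.
  have := sum_pm_twist S hc; rewrite sum_pm_card g_balanced subrr => /esym/eqP.
  rewrite mulf_eq0 pnatr_eq0 eqn0Ngt => /orP [/eqP //|/negP[]].
  by apply/card_gt0P; exists [ffun=> false].
have [H HC Hg] := exists_majority g_unbalanced.
have [x xH sqrt_le] := huang R S HC.
apply: (le_trans sqrt_le); rewrite ler_nat.
exact: leq_trans (leq_sens_at_twist Hg xH) (leq_bigmax x).
Qed.
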